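(* Let $I$ be an $\mathfrak m$-primary ideal of $R$ and let $r>0$ be such that $\mathfrak m^r\subset I$. Then for every integer $m\ge r$, $$\dim_{\mathbf k}(R/I)=\dim_{\mathbf k}(A^{(m)}/I^{(m)}).$$
   Context: $\mathbf{k}$ is algebraically closed; $X\subset\mathbb{A}^N$ is an affine variety over $\mathbf k$ (possibly reducible) whose irreducible components all have dimension $n$, containing the origin $o$; $R=\mathcal O_{X,o}$ with maximal ideal $\mathfrak m$. $A^{(m)}\subset R$ is the set of elements of $R$ which are restrictions to $X$ of polynomials in $\mathbf k[x_1,\ldots,x_N]$ of degree $\le m$, and $I^{(m)}=A^{(m)}\cap I$. *)

From HB Require Import structures.
From mathcomp Require Import all_boot all_order all_algebra.
From mathcomp Require Export mpoly.
Set Implicit Arguments. Unset Strict Implicit. Unset Printing Implicit Defensive.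
Import Order.TTheory GRing.Theory Num.Theory.
Local Open Scope ring_scope.

Definition point (k : closedFieldType) (N : nat) := 'I_N -> k.

Definition origin (k : closedFieldType) (N : nat) : point k N := fun _ => 0.

Definition pset (k : closedFieldType) (N : nat) := point k N -> Prop.

Definition psubset (k : closedFieldType) (N : nat) (Y Z : pset k N) :=
  forall x, Y x -> Z x.

Definition pstrict (k : closedFieldType) (N : nat) (Y Z : pset k N) :=
  psubset Y Z /\ exists x, Z x /\ ~ Y x.

Definition zclosed (k : closedFieldType) (N : nat) (Y : pset k N) :=
  exists S : {mpoly k[N]} -> Prop,
    forall x, Y x <-> (forall p, S p -> p.@[x] = 0).

(* affine variety (= algebraic subset of A^N, possibly reducible) *)
Definition affine_variety (k : closedFieldType) (N : nat) (X : pset k N) :=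
  zclosed X.

Definition zirreducible (k : closedFieldType) (N : nat) (Y : pset k N) :=
  [/\ zclosed Y, (exists x, Y x) &
      forall Y1 Y2, zclosed Y1 -> zclosed Y2 ->
        (forall x, Y x -> Y1 x \/ Y2 x) -> psubset Y Y1 \/ psubset Y Y2].

Definition irr_component (k : closedFieldType) (N : nat) (X Y : pset k N) :=
  [/\ zirreducible Y, psubset Y X &
      forall Z, zirreducible Z -> psubset Y Z -> psubset Z X -> psubset Z Y].

Definition chain_to (k : closedFieldType) (N : nat) (Y : pset k N) (d : nat) :=
  exists C : nat -> pset k N,
    [/\ forall i, (i <= d)%N -> zirreducible (C i),
        forall i, (i < d)%N -> pstrict (C i) (C i.+1) &
        forall x, C d x <-> Y x].

Definition zdim (k : closedFieldType) (N : nat) (Y : pset k N) (n : nat) :=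
  chain_to Y n /\ ~ chain_to Y n.+1.

Definition pure_dim (k : closedFieldType) (N : nat) (X : pset k N) (n : nat) :=
  forall Y, irr_component X Y -> zdim Y n.

Definition vanishes_on (k : closedFieldType) (N : nat) (X : pset k N)
  (p : {mpoly k[N]}) := forall x, X x -> p.@[x] = 0.

(* phi : k[x_1..x_N] -> R exhibits R as the localization of
   k[x_1..x_N]/I(X) at the maximal ideal of the origin, i.e. as the
   localization of k[x] at S = {g | g(o) <> 0} modulo I(X). *)
Definition is_local_ring_at_origin (k : closedFieldType) (N : nat)
  (X : pset k N) (R : comUnitRingType) (phi : {mpoly k[N]} -> R) :=
  [/\ forall g : {mpoly k[N]}, g.@[@origin k N] != 0 -> phi g \is a GRing.unit,
      forall y : R, exists f g : {mpoly k[N]},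
        g.@[@origin k N] != 0 /\ y * phi g = phi f &
      forall f : {mpoly k[N]},
        phi f = 0 <-> exists s : {mpoly k[N]},
          s.@[@origin k N] != 0 /\ vanishes_on X (s * f)].

Definition is_ideal (R : comUnitRingType) (I : R -> Prop) :=
  [/\ I 0, forall a b, I a -> I b -> I (a + b) &
      forall a b, I b -> I (a * b)].

(* maximal ideal of the local ring R: its non-units *)
Definition max_ideal (R : comUnitRingType) : R -> Prop :=
  fun x => x \isn't a GRing.unit.

Definition radical (R : comUnitRingType) (I : R -> Prop) : R -> Prop :=
  fun x => exists n : nat, I (x ^+ n).

Definition primary_to (R : comUnitRingType) (P I : R -> Prop) :=
  [/\ is_ideal I, ~ I 1,
      (forall a b, I (a * b) -> ~ I a -> exists n : nat, I (b ^+ n)) &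
      forall x, radical I x <-> P x].

Definition ideal_pow (R : comUnitRingType) (M : R -> Prop) (r : nat) : R -> Prop :=
  fun y => exists (s : nat) (a : 'I_s -> R) (x : 'I_s -> 'I_r -> R),
    (forall i j, M (x i j)) /\ y = \sum_(i < s) a i * \prod_(j < r) x i j.

(* k acts on R through the constants: c . y := phi (c%:MP) * y *)
Definition quot_dim (k : closedFieldType) (N : nat) (R : comUnitRingType)
  (phi : {mpoly k[N]} -> R) (V W : R -> Prop) (d : nat) :=
  exists b : 'I_d -> R,
    [/\ forall i, V (b i),
        (forall c : 'I_d -> k,
           W (\sum_(i < d) phi (c i)%:MP * b i) -> forall i, c i = 0) &
        (forall v, V v -> exists c : 'I_d -> k,
           W (v - \sum_(i < d) phi (c i)%:MP * b i))].

(* A^(m): restrictions of polynomials of degree <= m (msize = 1 + degree) *)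
Definition Adeg (k : closedFieldType) (N : nat) (R : comUnitRingType)
  (phi : {mpoly k[N]} -> R) (m : nat) : R -> Prop :=
  fun y => exists p : {mpoly k[N]}, (msize p <= m.+1)%N /\ y = phi p.

(* Every element of R = O_{X,o} is f/g with g(o) <> 0, and modulo m^r the
   inverse of g is a polynomial: writing g = c (1 - h) with h(o) = 0, the
   geometric sum c^-1 (1 + h + ... + h^(r-1)) inverts g up to h^r, which lies
   in m^r and hence in I.  Monomials of degree >= r also lie in m^r, so the
   images of the monomials of degree < r span R/I.  A subfamily of them is a
   k-basis of R/I; its members have degree < r <= m, so they lie in A^(m),
   and they stay a basis of A^(m)/I^(m) because A^(m) is a k-subspace. *)
From mathcomp Require Import all_boot all_algebra.
From mathcomp Require Import mpoly.
From mathcomp Require Import ring.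
From Stdlib Require Import Classical.
Import GRing.Theory.
Set Implicit Arguments. Unset Strict Implicit. Unset Printing Implicit Defensive.
Local Open Scope ring_scope.

Lemma mpolyX_prod_vars (k : closedFieldType) (N : nat) (m : 'X_{1..N}) :
  exists s : seq 'I_N,
    size s = mdeg m /\ 'X_[m] = \prod_(i <- s) ('X_i : {mpoly k[N]}).
Proof.
move Hm : (mdeg m) => d; elim: d m Hm => [|d IH] m Hm.
  move/eqP: Hm; rewrite mdeg_eq0 => /eqP ->.
  by exists [::]; rewrite big_nil mpolyX0.
have [i Hi] : exists i, (0 < m i)%N.
  apply: NNPP => H; move: Hm; rewrite mdegE big1 // => i _.
  by apply/eqP; rewrite -leqn0 leqNgt; apply/negP => Hi; apply: H; exists i.
pose m' := [multinom m j - (i == j) | j < N].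
have em : m = (m' + U_(i))%MM.
  apply/mnmP => j; rewrite mnmDE mnmE mnm1E.
  by case: (eqVneq i j) => [<-|_]; [rewrite subnK | rewrite subn0 addn0].
have [|s [ss es]] := IH m'; first by move: Hm; rewrite em mdegD mdeg1 addn1 => -[].
by exists (i :: s); rewrite /= ss em mpolyXD es big_cons mulrC.
Qed.

Lemma mpoly_inv_mod_pow (k : fieldType) (N : nat) (v : 'I_N -> k)
  (g : {mpoly k[N]}) (r : nat) : g.@[v] != 0 ->
  exists u h : {mpoly k[N]}, h.@[v] = 0 /\ g * u = 1 - h ^+ r.
Proof.
set c := g.@[v] => c0.
pose h := 1 - c^-1%:MP * g.
exists (c^-1%:MP * \sum_(i < r) h ^+ i), h; split.
  by rewrite /h mevalB mevalM !mevalC -/c mulVf // ?meval1 subrr.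
have e1 : h - 1 = - (c^-1%:MP * g) by rewrite /h addrAC subrr add0r.
by rewrite -opprB subrX1 e1 mulNr opprK mulrA [g * _]mulrC.
Qed.

Section LocalRing.

Variables (k : closedFieldType) (N : nat) (X : pset k N).
Variables (R : comUnitRingType) (phi : {rmorphism {mpoly k[N]} -> R}).

Local Notation "c *k y" := (phi c%:MP * y) (at level 40).

Definition span_mod (I : R -> Prop) (n : nat) (b : 'I_n -> R) (y : R) :=
  exists c : 'I_n -> k, I (y - \sum_(i < n) c i *k b i).

Definition free_mod (I : R -> Prop) (n : nat) (b : 'I_n -> R) :=
  forall c : 'I_n -> k, I (\sum_(i < n) c i *k b i) -> forall i, c i = 0.

Section IdealSpan.

Variables (I : R -> Prop) (HI : is_ideal I).

Lemma span_mod_ideal n (b : 'I_n -> R) y : I y -> span_mod I b y.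
Proof.
move=> Iy; exists (fun _ => 0).
by rewrite big1 ?subr0 // => i _; rewrite mpolyC0 rmorph0 mul0r.
Qed.

Lemma span_modD n (b : 'I_n -> R) y1 y2 :
  span_mod I b y1 -> span_mod I b y2 -> span_mod I b (y1 + y2).
Proof.
move=> [c1 H1] [c2 H2]; exists (fun i => c1 i + c2 i).
have -> : y1 + y2 - \sum_(i < n) (c1 i + c2 i) *k b i =
    (y1 - \sum_(i < n) c1 i *k b i) + (y2 - \sum_(i < n) c2 i *k b i).
  rewrite addrACA -opprD -big_split /=; congr (_ - _).
  by apply: eq_bigr => i _; rewrite mpolyCD rmorphD mulrDl.
by case: HI => _ HD _; apply: HD.
Qed.

Lemma span_mod_free_subfamily (P : R -> Prop) n (b : 'I_n -> R) :
  (forall i, P (b i)) -> (forall y, span_mod I b y) ->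
  exists d (b' : 'I_d -> R),
    [/\ forall i, P (b' i), free_mod I b' & forall y, span_mod I b' y].
Proof.
elim: n b => [|n IH] b Pb spanb; first by exists 0%N, b; split => // c _ [].
have [freeb|] := classic (free_mod I b); first by exists n.+1, b.
move=> /not_all_ex_not [c /not_all_ex_not [Ic /not_all_ex_not [j cj0]]].
apply: (IH (fun i => b (lift j i))) => [i|y]; first exact: Pb.
have [c1 H1] := spanb y.
(* Use the relation [sum c_i b_i \in I] to eliminate [b j]. *)
pose t := c1 j / c j.
exists (fun i => c1 (lift j i) - t * c (lift j i)).
move: H1 Ic; rewrite !(bigD1_ord j) //= => H1 Ic.
have scale_bj : c1 j *k b j = t *k (c j *k b j).
  by rewrite mulrA -rmorphM -mpolyCM /t divfK //; apply/eqP.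
rewrite (eq_bigr (fun i => c1 (lift j i) *k b (lift j i)
                       - t *k (c (lift j i) *k b (lift j i)))); last first.
  by move=> i _; rewrite mpolyCB mpolyCM rmorphB rmorphM mulrBl mulrA.
rewrite sumrB -mulr_sumr scale_bj in H1 *.
set S1 := \sum_(i < n) _ in H1 *; set S := \sum_(i < n) _ in Ic *.
set A := c j *k b j in H1 Ic *; set s := phi t%:MP in H1 *.
have -> : y - (S1 - s * S) = (y - (s * A + S1)) + s * (A + S) by ring.
by case: HI => _ HD HM; apply: HD => //; apply: HM.
Qed.

End IdealSpan.

Definition low_monomial (r : nat) (i : 'I_#|{: 'X_{1..N < r}}|) : R :=
  phi 'X_[(enum_val i : 'X_{1..N < r})].
Arguments low_monomial : clear implicits.

Section Adeg.

Variable m : nat.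

Lemma Adeg0 : Adeg phi m 0.
Proof. by exists 0; rewrite msize0 rmorph0. Qed.

Lemma AdegB y z : Adeg phi m y -> Adeg phi m z -> Adeg phi m (y - z).
Proof.
move=> [p [Hp ->]] [q [Hq ->]]; exists (p - q); rewrite rmorphB; split => //.
by apply: leq_trans (msizeD_le _ _) _; rewrite msizeN geq_max Hp Hq.
Qed.

Lemma AdegD y z : Adeg phi m y -> Adeg phi m z -> Adeg phi m (y + z).
Proof.
move=> [p [Hp ->]] [q [Hq ->]]; exists (p + q); rewrite rmorphD; split => //.
by apply: leq_trans (msizeD_le _ _) _; rewrite geq_max Hp Hq.
Qed.

Lemma AdegZ c y : Adeg phi m y -> Adeg phi m (c *k y).
Proof.
move=> [p [Hp ->]]; exists (c%:MP * p); rewrite rmorphM; split => //.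
by rewrite mul_mpolyC; apply: leq_trans (msizeZ_le _ _) Hp.
Qed.

Lemma Adeg_sub_comb n (b : 'I_n -> R) (c : 'I_n -> k) y :
  Adeg phi m y -> (forall i, Adeg phi m (b i)) ->
  Adeg phi m (y - \sum_(i < n) c i *k b i).
Proof.
move=> Ay Ab; apply: AdegB => //.
apply: (big_ind (Adeg phi m)) => [|u v|i _]; [exact: Adeg0|exact: AdegD|exact: AdegZ].
Qed.

Lemma Adeg_low_monomial r i : (r <= m.+1)%N -> Adeg phi m (low_monomial r i).
Proof.
move=> Hrm; exists 'X_[(enum_val i : 'X_{1..N < r})]; split => //.
by rewrite msizeX (leq_trans (bmdeg _) Hrm).
Qed.

End Adeg.

Hypothesis Ho : X (@origin k N).
Hypothesis Hloc : is_local_ring_at_origin X phi.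

Lemma nonunit_of_meval0 (h : {mpoly k[N]}) :
  h.@[@origin k N] = 0 -> phi h \isn't a GRing.unit.
Proof.
move=> h0; apply/negP => /unitrP [z [zh hz]].
case: Hloc => _ Hfrac Hker; have [f [g [g0 e]]] := Hfrac z.
have : phi (h * f - g) = 0 by rewrite rmorphB rmorphM -e mulrA hz mul1r subrr.
move/Hker=> [s [s0 van]]; have := van _ Ho.
rewrite mevalM mevalB mevalM h0 mul0r sub0r mulrN => /eqP.
by rewrite oppr_eq0 mulf_eq0 (negbTE s0) (negbTE g0).
Qed.

Variables (I : R -> Prop) (r : nat).
Hypothesis HrI : forall y, ideal_pow (@max_ideal R) r y -> I y.

Lemma ideal_pow_vanishing_prod (s : seq {mpoly k[N]}) (a : R) :
  (forall h, h \in s -> h.@[@origin k N] = 0) -> (r <= size s)%N ->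
  I (a * phi (\prod_(h <- s) h)).
Proof.
move=> s0 Hr; apply: HrI.
rewrite -(cat_take_drop r s) big_cat /= rmorphM.
set t := take r s; have st : size t = r by rewrite size_takel.
exists 1%N, (fun _ => a * phi (\prod_(h <- drop r s) h)), (fun _ j => phi (nth 0 t j)).
split.
  move=> _ j; apply: nonunit_of_meval0; apply: s0.
  by apply: (mem_take (n0 := r)); apply: mem_nth; rewrite st.
by rewrite big_ord1 rmorph_prod (big_nth 0) st big_mkord mulrAC -mulrA.
Qed.

Hypothesis HI : is_ideal I.

Lemma span_mod_low_monomial_poly (p : {mpoly k[N]}) :
  span_mod I (low_monomial r) (phi p).
Proof.
elim/mpolyind: p => [|c m p _ _ IH]; first by apply: span_mod_ideal; rewrite rmorph0; case: HI.
rewrite rmorphD; apply: span_modD => //; rewrite -mul_mpolyC.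
case: (ltnP (mdeg m) r) => Hm.
  pose bm : 'X_{1..N < r} := BMultinom Hm.
  exists (fun i => if i == enum_rank bm then c else 0).
  rewrite (bigD1 (enum_rank bm)) //= eqxx /low_monomial enum_rankK.
  rewrite big1 => [|i /negbTE ->]; last by rewrite mpolyC0 rmorph0 mul0r.
  by rewrite addr0 rmorphM subrr; case: HI.
apply: span_mod_ideal.
have [s [ss ->]] := mpolyX_prod_vars k m.
rewrite rmorphM -(big_map (fun i => 'X_i) xpredT id).
apply: ideal_pow_vanishing_prod; last by rewrite size_map ss.
by move=> _ /mapP [i _ ->]; rewrite mevalXU.
Qed.

Lemma span_mod_low_monomial (y : R) : span_mod I (low_monomial r) y.
Proof.
have [_ Hfrac _] := Hloc; have [f [g [g0 e]]] := Hfrac y.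
have [u [h [h0 gu]]] := mpoly_inv_mod_pow r g0.
have -> : y = phi (f * u) + y * phi (\prod_(x <- nseq r h) x).
  rewrite big_nseq iter_mulr_1 rmorphM -e -mulrA -rmorphM gu.
  by rewrite rmorphB rmorph1 mulrBr mulr1 subrK.
apply: span_modD => //; first exact: span_mod_low_monomial_poly.
apply: span_mod_ideal; apply: ideal_pow_vanishing_prod; last by rewrite size_nseq.
by move=> x; rewrite mem_nseq => /andP [_ /eqP ->].
Qed.

End LocalRing.

Theorem proposition2p3 (k : closedFieldType) (N n : nat) (X : pset k N)
  (HX : affine_variety X) (Hpure : pure_dim X n) (Ho : X (@origin k N))
  (R : comUnitRingType) (phi : {rmorphism {mpoly k[N]} -> R})
  (Hloc : is_local_ring_at_origin X phi)
  (I : R -> Prop) (HI : primary_to (@max_ideal R) I)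
  (r : nat) (Hr : (0 < r)%N)
  (HrI : forall y, ideal_pow (@max_ideal R) r y -> I y) :
  forall m : nat, (r <= m)%N ->
    exists d : nat,
      quot_dim phi (fun _ => True) I d /\
      quot_dim phi (Adeg phi m) (fun y => Adeg phi m y /\ I y) d.
Proof.
move=> m Hrm; have HId : is_ideal I by case: HI.
have [d [b [Ab freeb spanb]]] := span_mod_free_subfamily HId
  (fun i => Adeg_low_monomial phi i (leqW Hrm))
  (span_mod_low_monomial Ho Hloc HrI HId).
exists d; split; exists b; split => //.
- by move=> v _; apply: spanb.
- by move=> c [_ Ic]; apply: freeb.
- move=> v Av; have [c Ic] := spanb v.
  by exists c; split => //; apply: Adeg_sub_comb.
Qed.
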